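(* Let $\sigma\in B_3$ and write $\sigma=(\sigma_1\sigma_2\sigma_1)^k w$ as in the definition of the rotation number, so $rot(\sigma)=k/4$. Then $$lk(\sigma)=12\, rot(\sigma)+lk(w)=12\, rot(\sigma)+\Phi(\bar\sigma).$$
   Context: $B_3$ is the braid group on three strands with standard generators $\sigma_1,\sigma_2$. The linking number $lk:B_3\to\mathbb{Z}$ is the exponent sum homomorphism: $lk(\sigma_{i_1}^{j_1}\cdots\sigma_{i_m}^{j_m})=j_1+\dots+j_m$. Let $\bar\sigma\in PSL(2,\mathbb{Z})$ be the image of $\sigma$ under $\sigma_1\mapsto \pm\begin{pmatrix}1&0\\-1&1\end{pmatrix}$, $\sigma_2\mapsto \pm\begin{pmatrix}1&1\\0&1\end{pmatrix}$. Rademacher function: with $A=\pm\begin{pmatrix}0&1\\-1&0\end{pmatrix}$, $B=\pm\begin{pmatrix}1&-1\\1&0\end{pmatrix}$, $PSL(2,\mathbb{Z})=\langle A\rangle *\langle B\rangle\cong\mathbb{Z}/2*\mathbb{Z}/3$, so every $g$ is uniquely $B^{r_1}AB^{r_2}A\cdots AB^{r_k}$ with $r_1,r_k\in\{-1,0,1\}$ and $r_i\in\{-1,1\}$ otherwise; $\Phi(g)=\sum_i r_i$. Rotation number: for $g=\pm\begin{pmatrix}\alpha&\beta\\ \gamma&\delta\end{pmatrix}$ put $a=\gamma/\alpha$, $b=\delta/\beta\in\mathbb{Q}\cup\{\infty\}$ ($\infty$ read as $\pm\infty$ as needed). For $g=\bar\sigma$ one of the following holds, and $\sigma$ is written uniquely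 as $(\sigma_1\sigma_2\sigma_1)^k w$ accordingly: (1) $0\le a<b\le+\infty$: $k$ even, $w$ a word in $\sigma_1^{-1},\sigma_2$ only; (2) $-\infty\le a<b\le 0$: $k$ odd, $w$ a word in $\sigma_1^{-1},\sigma_2$; (3) $0\le b<a\le+\infty$: $k$ odd, $w$ a word in $\sigma_1,\sigma_2^{-1}$; (4) $-\infty\le b<a\le 0$: $k$ even, $w$ a word in $\sigma_1,\sigma_2^{-1}$ (cases that overlap give the same $k$ and $w$). Then $rot(\sigma)=k/4$. *)

From HB Require Import structures.
From mathcomp Require Import all_boot all_order all_algebra.
Set Implicit Arguments. Unset Strict Implicit. Unset Printing Implicit Defensive.
Import Order.TTheory GRing.Theory Num.Theory.
Local Open Scope ring_scope.

(** A letter: (gen, inv) with gen = false for sigma_1, true for sigma_2;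
    inv = true means the inverse generator. *)
Definition letter := (bool * bool)%type.
Definition word := seq letter.

Definition s1 : letter := (false, false).
Definition s2 : letter := (true, false).
Definition s1inv : letter := (false, true).
Definition s2inv : letter := (true, true).
Definition linv (l : letter) : letter := (l.1, ~~ l.2).

(** Equality in B_3 = < s1, s2 | s1 s2 s1 = s2 s1 s2 >:
    the congruence generated by free cancellation and the braid relation. *)
Inductive breq : word -> word -> Prop :=
| breq_refl w : breq w w
| breq_sym u v : breq u v -> breq v u
| breq_trans u v x : breq u v -> breq v x -> breq u x
| breq_ctx u v x y : breq x y -> breq (u ++ x ++ v) (u ++ y ++ v)
| breq_cancel l : breq [:: l; linv l] [::]
| breq_braid : breq [:: s1; s2; s1] [:: s2; s1; s2].

(** Linking number = exponent sum. *)
Definition lk_letter (l : letter) : int := if l.2 then -1 else 1.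
Definition lk (w : word) : int := \sum_(l <- w) lk_letter l.

Definition Delta_pow (k : int) : word :=
  match k with
  | Posz n => flatten (nseq n [:: s1; s2; s1])
  | Negz n => flatten (nseq n.+1 [:: s1inv; s2inv; s1inv])
  end.

Definition mx2 (a b c d : int) : 'M[int]_2 :=
  \matrix_(i < 2, j < 2)
    if i == 0 then (if j == 0 then a else b) else (if j == 0 then c else d).

(** Image in SL(2,Z) (representing PSL(2,Z) up to sign). *)
Definition letter_mx (l : letter) : 'M[int]_2 :=
  match l with
  | (false, false) => mx2 1 0 (-1) 1
  | (false, true)  => mx2 1 0 1 1
  | (true, false)  => mx2 1 1 0 1
  | (true, true)   => mx2 1 (-1) 0 1
  end.
Definition bar (w : word) : 'M[int]_2 := foldr (fun l M => letter_mx l *m M) 1%:M w.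

Definition psl_eq (M N : 'M[int]_2) : Prop := M = N \/ M = - N.

(** Rademacher function: A, B and the normal form B^{r1} A B^{r2} A ... A B^{rk}. *)
Definition Amx : 'M[int]_2 := mx2 0 1 (-1) 0.
Definition Bmx : 'M[int]_2 := mx2 1 (-1) 1 0.
Definition Binvmx : 'M[int]_2 := mx2 0 1 (-1) 1.
Definition Bpow (r : int) : 'M[int]_2 :=
  if r == 0 then 1%:M else if r == 1 then Bmx else Binvmx.

Fixpoint evalNF (rs : seq int) : 'M[int]_2 :=
  match rs with
  | [::] => 1%:M
  | [:: r] => Bpow r
  | r :: rs' => Bpow r *m Amx *m evalNF rs'
  end.

Definition is_nf (rs : seq int) : Prop :=
  [/\ (0 < size rs)%N,
      all (fun r => r \in [:: -1; 0; 1]) rs &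
      forall i, (0 < i)%N -> (i < (size rs).-1)%N -> nth 0 rs i != 0].

(** Phi g = n : the sum of the exponents of the (unique) normal form of g. *)
Definition Phi_eq (g : 'M[int]_2) (n : int) : Prop :=
  forall rs, is_nf rs -> psl_eq (evalNF rs) g -> n = \sum_(r <- rs) r.

(** a = gamma/alpha, b = delta/beta in Q u {oo}; None stands for oo. *)
Definition ratio (num den : int) : option rat :=
  if den == 0 then None else Some (num%:~R / den%:~R).
Definition a_of (M : 'M[int]_2) := ratio (M 1 0) (M 0 0).
Definition b_of (M : 'M[int]_2) := ratio (M 1 1) (M 0 1).

Definition case1 (a b : option rat) : Prop :=
  exists2 x, a = Some x & 0 <= x /\ (b = None \/ exists2 y, b = Some y & x < y).
Definition case2 (a b : option rat) : Prop :=
  exists2 y, b = Some y & y <= 0 /\ (a = None \/ exists2 x, a = Some x & x < y).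
Definition case3 (a b : option rat) : Prop :=
  exists2 y, b = Some y & 0 <= y /\ (a = None \/ exists2 x, a = Some x & y < x).
Definition case4 (a b : option rat) : Prop :=
  exists2 x, a = Some x & x <= 0 /\ (b = None \/ exists2 y, b = Some y & y < x).

Definition in_alph1 (w : word) : bool := all (fun l => (l == s1inv) || (l == s2)) w.
Definition in_alph2 (w : word) : bool := all (fun l => (l == s1) || (l == s2inv)) w.

Definition rot_decomp (s : word) (k : int) (w : word) : Prop :=
  breq s (Delta_pow k ++ w) /\
  (let a := a_of (bar s) in let b := b_of (bar s) in
   [\/ [/\ case1 a b, ~~ odd `|k|%N & in_alph1 w],
       [/\ case2 a b, odd `|k|%N & in_alph1 w],
       [/\ case3 a b, odd `|k|%N & in_alph2 w] |
       [/\ case4 a b, ~~ odd `|k|%N & in_alph2 w]]).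

Definition rot_of (k : int) : rat := k%:~R / 4%:R.

(* The exponent sum is invariant under the braid relations and Delta = s1 s2 s1
   has exponent sum 3, so lk(Delta^k w) = 3k + lk w = 12 (k/4) + lk w.

   For Phi, note that in PSL(2,Z) the image of Delta is A, that A s1 = s2 A, and
   that s1 = A B and s2^-1 = A B^-1.  Hence a word u in s1, s2^-1 is the product
   (A B^m_1) ... (A B^m_n) with m_i = +-1 the exponents of its letters, and after
   conjugating by A if necessary, bar(Delta^k w) takes the form
   B^r (A B^m_1) ... (A B^m_n) A^f with r + sum m_i = lk w: this is a normal form
   whose exponent sum is lk w.  Such expressions are unique: the monoid generated
   by the images of s1 and s2^-1 is free and consists of matrices with sign
   pattern [[+, -], [-, +]], which left multiplication by B^(+-1) or right
   multiplication by A visibly destroys. *)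

From mathcomp Require Import all_boot all_order all_algebra.
From mathcomp Require Import zify ring.
Import Order.TTheory GRing.Theory Num.Theory.
Local Open Scope ring_scope.
Set Implicit Arguments. Unset Strict Implicit.

Lemma mx2_mul (a b c d a' b' c' d' : int) : mx2 a b c d *m mx2 a' b' c' d' =
  mx2 (a * a' + b * c') (a * b' + b * d') (c * a' + d * c') (c * b' + d * d').
Proof.
apply/matrixP => i j; rewrite !mxE !big_ord_recl big_ord0 !mxE.
by case: i => [[|[|//]] ?]; case: j => [[|[|//]] ?]; rewrite /= addr0.
Qed.

Lemma mx2_opp (a b c d : int) : - mx2 a b c d = mx2 (- a) (- b) (- c) (- d).
Proof.
by apply/matrixP => i j; rewrite !mxE; case: i => [[|[|//]] ?]; case: j => [[|[|//]] ?].
Qed.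

Lemma mx2_1 : mx2 1 0 0 1 = 1%:M.
Proof.
by apply/matrixP => i j; rewrite !mxE; case: i => [[|[|//]] ?]; case: j => [[|[|//]] ?].
Qed.

Lemma mx2_inj (a b c d a' b' c' d' : int) : mx2 a b c d = mx2 a' b' c' d' ->
  [/\ a = a', b = b', c = c' & d = d'].
Proof.
move=> E; have entry i j := congr1 (fun M : 'M[int]_2 => M i j) E.
by move: (entry 0 0) (entry 0 1) (entry 1 0) (entry 1 1); rewrite !mxE.
Qed.

Lemma mx2_unit (a b c d : int) : a * d - b * c = 1 -> mx2 a b c d \in unitmx.
Proof.
move=> det1; suff /mulmx1_unit[] : mx2 a b c d *m mx2 d (- b) (- c) a = 1%:M by [].
by rewrite mx2_mul -mx2_1; congr mx2; lia.
Qed.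

Ltac mx2_eval := rewrite -?mx2_1 ?mx2_mul ?mx2_opp ?mx2_mul; congr mx2; lia.

Lemma psl_eq_refl M : psl_eq M M. Proof. by left. Qed.

Lemma psl_eq_sym M N : psl_eq M N -> psl_eq N M.
Proof. by case=> ->; [left | right; rewrite opprK]. Qed.

Lemma psl_eq_trans M N K : psl_eq M N -> psl_eq N K -> psl_eq M K.
Proof. by case=> ->; case=> ->; [left | right | right | left; rewrite opprK]. Qed.

Lemma psl_eq_mul M M' N N' : psl_eq M M' -> psl_eq N N' -> psl_eq (M *m N) (M' *m N').
Proof.
by case=> ->; case=> ->; rewrite ?mulNmx ?mulmxN ?opprK; [left | right | right | left].
Qed.

Lemma psl_eq_mull K M N : psl_eq M N -> psl_eq (K *m M) (K *m N).
Proof. exact/psl_eq_mul/psl_eq_refl. Qed.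

Lemma psl_eq_mulr K M N : psl_eq M N -> psl_eq (M *m K) (N *m K).
Proof. by move/psl_eq_mul; apply; apply: psl_eq_refl. Qed.

Lemma psl_eq_mulKl K M N : K \in unitmx -> psl_eq (K *m M) (K *m N) -> psl_eq M N.
Proof. by move=> uK /(psl_eq_mull (invmx K)); rewrite !mulKmx. Qed.

Lemma psl_eq_mulKr K M N : K \in unitmx -> psl_eq (M *m K) (N *m K) -> psl_eq M N.
Proof. by move=> uK /(psl_eq_mulr (invmx K)); rewrite !mulmxK. Qed.

Lemma bar_cat u v : bar (u ++ v) = bar u *m bar v.
Proof. by elim: u => [|l u IH] /=; rewrite ?mul1mx // IH mulmxA. Qed.

Lemma lk_cat u v : lk (u ++ v) = lk u + lk v.
Proof. exact: big_cat. Qed.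

Lemma breq_bar u v : breq u v -> bar u = bar v.
Proof.
elim=> [//|? ? _ -> //|? ? ? _ -> _ -> //|? ? ? ? _ E| |].
- by rewrite !bar_cat E.
- by case=> [[] []] /=; mx2_eval.
- by rewrite /=; mx2_eval.
Qed.

Lemma breq_lk u v : breq u v -> lk u = lk v.
Proof.
elim=> [//|? ? _ -> //|? ? ? _ -> _ -> //|? ? ? ? _ E| |].
- by rewrite !lk_cat E.
- by case=> [[] []]; rewrite /lk !big_cons big_nil.
- by rewrite /lk !big_cons big_nil.
Qed.

Lemma lk_Delta_pow k : lk (Delta_pow k) = 3 * k.
Proof.
have lk_flatten_nseq n (u : word) : lk (flatten (nseq n u)) = n%:Z * lk u.
  elim: n => [|n IH]; first by rewrite /lk big_nil mul0r.
  by rewrite /= lk_cat IH -add1n PoszD mulrDl mul1r.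
case: k => n; rewrite lk_flatten_nseq /lk !big_cons big_nil /lk_letter /=.
- lia.
- rewrite NegzE; lia.
Qed.

Lemma lk_rot s k w : breq s (Delta_pow k ++ w) ->
  ((lk s)%:~R : rat) = 12%:R * rot_of k + (lk w)%:~R.
Proof.
move/breq_lk; rewrite lk_cat lk_Delta_pow => ->.
by rewrite /rot_of intrD intrM; field.
Qed.

Definition Apow (f : bool) : 'M[int]_2 := if f then Amx else 1%:M.

Lemma Amx_sqr : psl_eq (Amx *m Amx) 1%:M.
Proof. by right; rewrite /Amx; mx2_eval. Qed.

Lemma bar_Delta_pow k : psl_eq (bar (Delta_pow k)) (Apow (odd `|k|%N)).
Proof.
have bar_flatten_nseq n u : psl_eq (bar u) Amx ->
    psl_eq (bar (flatten (nseq n u))) (Apow (odd n)).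
  move=> uA; elim: n => [|n IH]; first exact: psl_eq_refl.
  rewrite /= bar_cat; apply: psl_eq_trans (psl_eq_mul uA IH) _.
  by case: (odd n); [apply: Amx_sqr | rewrite mulmx1; apply: psl_eq_refl].
case: k => n; apply: bar_flatten_nseq.
- by left; rewrite /= /Amx; mx2_eval.
- by right; rewrite /= /Amx; mx2_eval.
Qed.

Definition pos_mx (M : 'M[int]_2) : Prop :=
  exists a b c d : int, [/\ 0 < a, 0 <= b, 0 <= c & 0 < d] /\ M = mx2 a (- b) (- c) d.

Lemma bar_alph2_pos u : in_alph2 u -> pos_mx (bar u).
Proof.
elim: u => [|l u IH] /=; first by exists 1, 0, 0, 1; rewrite mx2_1.
case/andP=> l2 /IH[a [b [c [d [[a_gt0 b_ge0 c_ge0 d_gt0] ->]]]]].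
case: l l2 => [[] []] //= _.
- by exists (a + c), (b + d), c, d; split; [split; lia | mx2_eval].
- by exists a, b, (a + c), (b + d); split; [split; lia | mx2_eval].
Qed.

Lemma letter_mx_unit l : letter_mx l \in unitmx.
Proof. by case: l => [[] []]; apply: mx2_unit. Qed.

Lemma bar_alph2_inj u v : in_alph2 u -> in_alph2 v -> psl_eq (bar u) (bar v) -> u = v.
Proof.
elim: u v => [|l u IH] [|l' v] //=.
- move=> _ /andP[l'2 /bar_alph2_pos[a [b [c [d [[? ? ? ?] ->]]]]]].
  by case: l' l'2 => [[] []] //= _;
    rewrite -mx2_1 mx2_mul; case; rewrite ?mx2_opp => /mx2_inj[]; lia.
- move=> /andP[l2 /bar_alph2_pos[a [b [c [d [[? ? ? ?] ->]]]]]] _.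
  by case: l l2 => [[] []] //= _;
    rewrite -mx2_1 mx2_mul; case; rewrite ?mx2_opp => /mx2_inj[]; lia.
move=> /andP[l2 u2] /andP[l'2 v2].
have [<- | neq] := eqVneq l l'.
  by move/(psl_eq_mulKl (letter_mx_unit l))/IH => ->.
move: (bar_alph2_pos u2) (bar_alph2_pos v2).
move=> [a [b [c [d [[? ? ? ?] ->]]]]] [a' [b' [c' [d' [[? ? ? ?] ->]]]]].
case: l l2 neq => [[] []] //= _; case: l' l'2 => [[] []] //= _ _;
  rewrite !mx2_mul; case; rewrite ?mx2_opp => /mx2_inj[]; lia.
Qed.

Lemma Bpow_unit r : Bpow r \in unitmx.
Proof.
by rewrite /Bpow; case: ifP => _; [|case: ifP => _]; rewrite -?mx2_1; apply: mx2_unit.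
Qed.

Lemma Apow_unit f : Apow f \in unitmx.
Proof. by case: f; rewrite /= -?mx2_1; apply: mx2_unit. Qed.

Lemma Apow_mulA f : psl_eq (Apow f *m Amx) (Apow (~~ f)).
Proof. by case: f; [apply: Amx_sqr | rewrite mul1mx; apply: psl_eq_refl]. Qed.

Lemma letter_mx_alph2 l : (l == s1) || (l == s2inv) ->
  psl_eq (letter_mx l) (Amx *m Bpow (lk_letter l)).
Proof.
by case: l => [[] []] //= _; [right | left]; rewrite /Bpow /Amx /Bmx /Binvmx /=; mx2_eval.
Qed.

Definition swap_gen (l : letter) : letter := (~~ l.1, l.2).

Lemma Amx_letter_mx l : Amx *m letter_mx l = letter_mx (swap_gen l) *m Amx.
Proof. by case: l => [[] []]; rewrite /Amx /=; mx2_eval. Qed.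

Lemma Amx_bar w : Amx *m bar w = bar (map swap_gen w) *m Amx.
Proof.
elim: w => [|l w IH] /=; first by rewrite mulmx1 mul1mx.
by rewrite mulmxA Amx_letter_mx -!mulmxA IH.
Qed.

Lemma lk_swap_gen w : lk (map swap_gen w) = lk w.
Proof. by rewrite /lk big_map. Qed.

Lemma alph1_swap_gen w : in_alph1 w -> in_alph2 (map swap_gen w).
Proof. by elim: w => [|[[] []] w IH] //= /andP[_ /IH]. Qed.

Definition ABprod (t : seq int) : 'M[int]_2 := foldr (fun x M => Amx *m Bpow x *m M) 1%:M t.

Lemma evalNF_cons r t : evalNF (r :: t) = Bpow r *m ABprod t.
Proof.
elim: t r => [|x t IH] r; first by rewrite mulmx1.
by rewrite -[LHS]/(Bpow r *m Amx *m evalNF (x :: t)) IH /= !mulmxA.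
Qed.

Lemma ABprod_cat t t' : ABprod (t ++ t') = ABprod t *m ABprod t'.
Proof. by elim: t => [|x t IH] /=; rewrite ?mul1mx // IH mulmxA. Qed.

Lemma ABprod_nseq0 (f : bool) : ABprod (nseq f 0) = Apow f.
Proof. by case: f; rewrite /= ?mulmx1. Qed.

Lemma ABprod_alph2 u : in_alph2 u -> psl_eq (ABprod (map lk_letter u)) (bar u).
Proof.
elim: u => [_|l u IH] /=; first exact: psl_eq_refl.
case/andP=> l2 /IH u_eq.
exact: psl_eq_mul (psl_eq_sym (letter_mx_alph2 l2)) u_eq.
Qed.

Lemma pm1_seq_alph2 (t : seq int) : all (mem [:: -1; 1]) t ->
  exists2 u, in_alph2 u & t = map lk_letter u.
Proof.
elim: t => [|x t IH] /=; first by exists [::].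
case/andP=> x_pm1 /IH[u u2 ->].
by move: x_pm1; rewrite !inE => /orP[] /eqP->; [exists (s2inv :: u) | exists (s1 :: u)].
Qed.

Lemma is_nf_decomp rs : is_nf rs -> exists r u (f : bool),
  [/\ r \in [:: -1; 0; 1], in_alph2 u & rs = r :: map lk_letter u ++ nseq f 0].
Proof.
have pm1 (x : int) : x \in [:: -1; 0; 1] -> x != 0 -> x \in [:: -1; 1].
  by rewrite !inE => /or3P[] /eqP->.
case: rs => [[]//|r t] [_ /= /andP[r3 t3] mid].
case/lastP: t mid t3 => [|t z] mid; first by exists r, [::], false.
rewrite all_rcons => /andP[z3 t3].
have t_pm1 : all (mem [:: -1; 1]) t.
  apply/(all_nthP 0) => i lt_it; apply: pm1; first exact: (all_nthP 0 t3).
  by have := mid i.+1 isT; rewrite size_rcons ltnS /= nth_rcons lt_it; apply.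
have [z0 | nz0] := eqVneq z 0.
  have [u u2 ->] := pm1_seq_alph2 t_pm1.
  by exists r, u, true; rewrite z0 cats1.
have [|u u2 ->] := pm1_seq_alph2 (t := rcons t z).
  by rewrite all_rcons t_pm1 andbT; apply: pm1.
by exists r, u, false; rewrite cats0.
Qed.

(* The normal form [r :: map lk_letter u ++ nseq f 0] represents [M] and has
   exponent sum [n]; see [is_nf_decomp] and [ABprod_alph2]. *)
Definition Phi_rep (M : 'M[int]_2) (n : int) : Prop :=
  exists r u (f : bool), [/\ r \in [:: -1; 0; 1], in_alph2 u,
    psl_eq M (Bpow r *m bar u *m Apow f) & n = r + lk u].

Lemma Phi_rep_psl_eq M N n : psl_eq M N -> Phi_rep N n -> Phi_rep M n.
Proof.
move=> MN [r [u [f [r3 u2 Nu ->]]]].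
by exists r, u, f; split=> //; apply: psl_eq_trans MN Nu.
Qed.

Lemma Phi_rep_evalNF rs : is_nf rs -> Phi_rep (evalNF rs) (\sum_(x <- rs) x).
Proof.
case/is_nf_decomp=> r [u [f [r3 u2 ->]]]; exists r, u, f; split=> //.
  rewrite evalNF_cons ABprod_cat ABprod_nseq0 mulmxA.
  exact/psl_eq_mulr/psl_eq_mull/ABprod_alph2.
by rewrite big_cons big_cat big_map /=; case: f; rewrite /= ?big_cons big_nil ?addr0.
Qed.

Lemma Phi_rep_mulA M n : Phi_rep M n -> Phi_rep (M *m Amx) n.
Proof.
move=> [r [u [f [r3 u2 Mu ->]]]]; exists r, u, (~~ f); split=> //.
apply: psl_eq_trans (psl_eq_mulr _ Mu) _.
by rewrite -mulmxA; apply/psl_eq_mull/Apow_mulA.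
Qed.

Lemma Phi_rep_alph2 f w : in_alph2 w -> Phi_rep (Apow f *m bar w) (lk w).
Proof.
case: f; last first.
  move=> w2; exists 0, w, false; split=> //=; last by rewrite add0r.
  by rewrite !mul1mx mulmx1; left.
case: w => [_ | l w /andP[l2 w2]] /=.
  exists 0, [::], true; split=> //=; last by rewrite add0r.
  by rewrite !mul1mx mulmx1; left.
exists (lk_letter l), w, false; split=> //.
- by case: l l2 => [[] []].
- rewrite mulmx1 mulmxA; apply: psl_eq_mulr.
  apply: psl_eq_trans (psl_eq_mull _ (letter_mx_alph2 l2)) _.
  by rewrite mulmxA; apply: psl_eq_trans (psl_eq_mulr _ Amx_sqr) _; rewrite mul1mx; left.
- by rewrite /lk big_cons.
Qed.

Lemma Phi_rep_alph1 f w : in_alph1 w -> Phi_rep (Apow f *m bar w) (lk w).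
Proof.
move=> w1; rewrite -lk_swap_gen.
apply: Phi_rep_psl_eq (Phi_rep_mulA (Phi_rep_alph2 (~~ f) (alph1_swap_gen w1))).
rewrite -mulmxA -Amx_bar mulmxA.
by apply: psl_eq_mulr; rewrite -[X in Apow X]negbK; apply/psl_eq_sym/Apow_mulA.
Qed.

(* B^(+-1) on the left, or A on the right, breaks the sign pattern of [pos_mx]. *)
Lemma Bpow_pos_Apow_inj r r' f f' P P' :
  r \in [:: -1; 0; 1] -> r' \in [:: -1; 0; 1] -> pos_mx P -> pos_mx P' ->
  psl_eq (Bpow r *m P *m Apow f) (Bpow r' *m P' *m Apow f') -> r = r' /\ f = f'.
Proof.
move=> + + [a [b [c [d [[? ? ? ?] ->]]]]] [a' [b' [c' [d' [[? ? ? ?] ->]]]]].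
rewrite !inE => /or3P[]/eqP-> /or3P[]/eqP->; case: f; case: f'; try by move=> _.
all: rewrite /Bpow /Apow /Amx /Bmx /Binvmx /= -?mx2_1 !mx2_mul.
all: by case; rewrite ?mx2_opp => /mx2_inj[]; lia.
Qed.

Lemma Phi_rep_uniq M n n' : Phi_rep M n -> Phi_rep M n' -> n = n'.
Proof.
move=> [r [u [f [r3 u2 Mu ->]]]] [r' [u' [f' [r3' u2' Mu' ->]]]].
have E := psl_eq_trans (psl_eq_sym Mu) Mu'.
case: (Bpow_pos_Apow_inj r3 r3' (bar_alph2_pos u2) (bar_alph2_pos u2') E) => rr' ff'.
subst r' f'.
move/(psl_eq_mulKr (Apow_unit f))/(psl_eq_mulKl (Bpow_unit r)): E.
by move/(bar_alph2_inj u2 u2') => ->.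
Qed.

Theorem theorem2p1 (s : word) (k : int) (w : word) :
  rot_decomp s k w ->
  ((lk s)%:~R : rat) = 12%:R * rot_of k + (lk w)%:~R /\
  Phi_eq (bar s) (lk w).
Proof.
case=> s_Dw w_alph; split; first exact: lk_rot s_Dw.
have s_w : psl_eq (bar s) (Apow (odd `|k|%N) *m bar w).
  by rewrite (breq_bar s_Dw) bar_cat; apply/psl_eq_mulr/bar_Delta_pow.
have s_rep : Phi_rep (bar s) (lk w).
  apply: Phi_rep_psl_eq s_w _.
  by case: w_alph => -[_ _ w_alph]; [apply: Phi_rep_alph1 | apply: Phi_rep_alph1 |
    apply: Phi_rep_alph2 | apply: Phi_rep_alph2].
move=> rs rs_nf rs_s.
exact: Phi_rep_uniq s_rep (Phi_rep_psl_eq (psl_eq_sym rs_s) (Phi_rep_evalNF rs_nf)).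
Qed.
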